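(* Let $q\ge 3$ and $\beta=0$. Let $\Omega=(G,\Lambda,\sigma)$ with $G=(V,E)$ be a feasible instance of the Potts model, let $v\in V\setminus\Lambda$, $B=B_\Omega(v)$, and let $\pi\in[q]^{B}$ be locally feasible. Then $\pi$ is feasible, i.e., there exists $\rho\in[q]^V$ with $w_\Omega(\rho)>0$ agreeing with $\pi$ on $B$.
   Context: Potts model: fix an integer $q\ge2$ and a real $\beta\ge0$; $[q]=\{1,\dots,q\}$, $0^0=1$. For a finite graph $G=(V,E)$ an instance is $\Omega=(G,\Lambda,\sigma)$, $\Lambda\subseteq V$, $\sigma\in[q]^\Lambda$; $w_\Omega(\pi)=\beta^{|\{uv\in E:\pi(u)=\pi(v)\}|}$ if $\pi\in[q]^V$ agrees with $\sigma$ on $\Lambda$, else $0$; $\Omega$ is feasible if some $\pi$ has $w_\Omega(\pi)>0$. For $S\subseteq V$ and $\rho\in[q]^S$, $w_{G[S]}(\rho)=\beta^{|\{uv\in E: u,v\in S,\rho(u)=\rho(v)\}|}$. For $S\subseteq V\setminus\Lambda$, $\pi\in[q]^S$ is locally feasible if $w_{G[\Lambda\cup S]}(\sigma\cup\pi)>0$, where $\sigma\cup\pi$ is the configuration on $\Lambda\cup S$ agreeing with $\sigma$ and $\pi$. A vertex is low-degree if $\deg_G(v)<\frac{q-1}{1-\beta}-2$ (for $\beta=0$: $\deg_G(v)<q-3$). $\partial B=\{u\in V\setminus B:\exists w\in B,uw\in E\}$. $B\subseteq V\setminus\Lambda$ is a permissive block in $\Omega$ if every $u\in\partial B\setminus\Lambda$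 is low-degree; $B_\Omega(S)$ is the minimal permissive block containing $S$. *)

From HB Require Import structures.
From mathcomp Require Import all_boot all_order all_algebra.
Set Implicit Arguments. Unset Strict Implicit. Unset Printing Implicit Defensive.
Import Order.TTheory GRing.Theory Num.Theory.
Local Open Scope ring_scope.

(* Graph G = (V, e): V a finite type, e a symmetric irreflexive relation
   (hypotheses in the theorem).
   Configurations are finite functions V -> 'I_q; a configuration on a
   subset S is a full function of which only the values on S matter. *)

Section Potts.
Variables (R : realFieldType) (V : finType) (q : nat) (e : rel V).

Definition mono_count (S : {set V}) (rho : V -> 'I_q) : nat :=
  #|[set [set u; w] | u in S, w in S & e u w && (rho u == rho w)]|.

(* w_{G[S]}(rho) = beta ^ (#monochromatic edges inside S); 0^0 = 1 *)
Definition w_induced (beta : R) (S : {set V}) (rho : V -> 'I_q) : R :=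
  beta ^+ mono_count S rho.

Definition w_Omega (beta : R) (Lambda : {set V}) (sigma : V -> 'I_q)
    (pi : V -> 'I_q) : R :=
  if [forall x in Lambda, pi x == sigma x]
  then beta ^+ mono_count [set: V] pi else 0.

Definition feasible (beta : R) (Lambda : {set V}) (sigma : V -> 'I_q) : Prop :=
  exists pi : {ffun V -> 'I_q}, 0 < w_Omega beta Lambda sigma pi.

(* sigma ∪ pi on Lambda ∪ S *)
Definition glue (Lambda : {set V}) (sigma pi : V -> 'I_q) : V -> 'I_q :=
  fun x => if x \in Lambda then sigma x else pi x.

Definition locally_feasible (beta : R) (Lambda : {set V}) (sigma : V -> 'I_q)
    (S : {set V}) (pi : V -> 'I_q) : Prop :=
  0 < w_induced beta (Lambda :|: S) (glue Lambda sigma pi).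

Definition deg (v : V) : nat := #|[set u | e v u]|.

Definition low_degree (beta : R) (v : V) : bool :=
  (deg v)%:R < (q%:R - 1) / (1 - beta) - 2.

Definition boundary (B : {set V}) : {set V} :=
  [set u in ~: B | [exists w in B, e u w]].

Definition permissive (beta : R) (Lambda : {set V}) (B : {set V}) : bool :=
  (B \subset ~: Lambda) &&
  [forall u in boundary B :\: Lambda, low_degree beta u].

(* minimal permissive block containing S (permissive blocks are closed under
   intersection, so this is the intersection of all of them) *)
Definition B_Omega (beta : R) (Lambda : {set V}) (S : {set V}) : {set V} :=
  \bigcap_(B | permissive beta Lambda B && (S \subset B)) B.

End Potts.

From HB Require Import structures.
From mathcomp Require Import all_boot all_order all_algebra.
From mathcomp Require Import zify lra.
Set Implicit Arguments. Unset Strict Implicit. Unset Printing Implicit Defensive.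
Import Order.TTheory GRing.Theory Num.Theory.
Local Open Scope ring_scope.

(* At beta = 0 a positive weight is the same as a proper colouring, so the
   claim is that the proper colouring pi of B, glued to sigma, extends to a
   proper colouring of G.  Take any proper extension rho0 of sigma and
   overwrite it by pi on B.  The only monochromatic edges left join B to its
   free boundary, whose vertices are low-degree; at beta = 0 this means they
   have fewer than q - 3 < q neighbours, so they can be recoloured greedily,
   one at a time, each with a colour unused by its neighbours. *)

Section ProperColouring.
Variables (V : finType) (q : nat) (e : rel V).
Hypotheses (e_sym : symmetric e) (e_irr : irreflexive e).

Definition proper_on (S : {set V}) (c : V -> 'I_q) : Prop :=
  forall u w, u \in S -> w \in S -> e u w -> c u != c w.

Lemma mono_count_eq0P (S : {set V}) (c : V -> 'I_q) :
  mono_count e S c = 0%N <-> proper_on S c.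
Proof.
rewrite /mono_count; split.
- move=> /eqP; rewrite cards_eq0 => /eqP mono0 u w uS wS euw.
  apply/negP => cuw.
  have : [set u; w] \in set0.
    by rewrite -mono0; apply/imset2P; exists u w; rewrite // inE wS euw cuw.
  by rewrite inE.
- move=> cP; apply/eqP; rewrite cards_eq0; apply/eqP/setP => z; rewrite inE.
  apply/negP => /imset2P [u w uS]; rewrite inE => /andP [wS /andP [euw cuw]] _.
  by move: (cP u w uS wS euw); rewrite cuw.
Qed.

Lemma exists_free_colour (c : V -> 'I_q) (x : V) :
  (deg e x < q)%N -> exists k : 'I_q, forall y, e x y -> k != c y.
Proof.
move=> degx; have := leq_imset_card c [set y | e x y].
set used := c @: _ => card_used.
have : (0 < #|~: used|)%N.
  by have := cardsC used; rewrite card_ord; move: degx card_used; rewrite /deg; lia.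
rewrite card_gt0 => /set0Pn [k]; rewrite inE => k_unused.
exists k => y exy; apply: contra k_unused => /eqP ->.
by apply/imsetP; exists y; rewrite ?inE.
Qed.

Lemma greedy_recolouring (S : {set V}) (c : {ffun V -> 'I_q}) :
  {in S, forall x, deg e x < q}%N ->
  (forall u w, u \notin S -> w \notin S -> e u w -> c u != c w) ->
  exists c' : {ffun V -> 'I_q},
    {in ~: S, c' =1 c} /\ proper_on [set: V] c'.
Proof.
move: {2}#|S| (erefl #|S|) => n; elim: n S c => [|n IH] S c cardS degS cP.
  move/eqP: cardS; rewrite cards_eq0 => /eqP S0.
  by exists c; split=> // u w _ _; apply: cP; rewrite S0 inE.
have [x xS] : exists x, x \in S by apply/set0Pn; rewrite -card_gt0 cardS.
have [k k_free] := exists_free_colour c (degS x xS).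
pose c1 := [ffun y => if y == x then k else c y].
have cardSx : #|S :\ x| = n by move: cardS; rewrite (cardsD1 x S) xS => -[].
have degSx : {in S :\ x, forall y, deg e y < q}%N.
  by move=> y; rewrite inE => /andP [_ /degS].
have c1P : forall u w, u \notin S :\ x -> w \notin S :\ x -> e u w -> c1 u != c1 w.
  move=> u w; rewrite !inE !negb_and !negbK /c1 !ffunE.
  case: (eqVneq u x) => [-> | ux]; case: (eqVneq w x) => [-> | wx] //= uS wS.
  - by rewrite e_irr.
  - exact: k_free.
  - by rewrite e_sym eq_sym; apply: k_free.
  - exact: cP.
have [c' [c'c1 c'P]] := IH (S :\ x) c1 cardSx degSx c1P.
exists c'; split=> // y; rewrite inE => yS.
rewrite c'c1 ?inE ?(negbTE yS) ?andbF // /c1 ffunE.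
by case: eqP => // yx; move: yS; rewrite yx xS.
Qed.

End ProperColouring.

Section ZeroTemperature.
Variables (R : realFieldType) (V : finType) (q : nat) (e : rel V).

Lemma gt0_expr0n (n : nat) : (0 : R) < 0 ^+ n -> n = 0%N.
Proof. by rewrite expr0n; case: n => //=; rewrite ltxx. Qed.

Lemma w_Omega0_gt0P (Lambda : {set V}) (sigma rho : V -> 'I_q) :
  0 < w_Omega e (0 : R) Lambda sigma rho <->
  {in Lambda, rho =1 sigma} /\ proper_on e [set: V] rho.
Proof.
rewrite /w_Omega; case: forallP => [agree | disagree]; last first.
  split; first by rewrite ltxx.
  move=> [agree _]; case: disagree => x; apply/implyP => xL.
  by rewrite agree.
rewrite -mono_count_eq0P; split.
- move=> /gt0_expr0n mono0; split=> // x xL.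
  by apply/eqP; have := agree x; rewrite xL.
- by move=> [_ ->]; rewrite expr0 ltr01.
Qed.

Lemma locally_feasible0P (Lambda : {set V}) (sigma : V -> 'I_q)
    (S : {set V}) (pi : V -> 'I_q) :
  locally_feasible e (0 : R) Lambda sigma S pi ->
  proper_on e (Lambda :|: S) (glue Lambda sigma pi).
Proof. by move=> /gt0_expr0n /mono_count_eq0P. Qed.

Lemma low_degree0_lt (u : V) : low_degree q e (0 : R) u -> (deg e u < q)%N.
Proof.
rewrite /low_degree subr0 divr1 => lowu.
by rewrite -(ltr_nat R); lra.
Qed.

End ZeroTemperature.

Section MinimalBlock.
Variables (R : realFieldType) (V : finType) (q : nat) (e : rel V).
Variables (beta : R) (Lambda S : {set V}).

Lemma permissive_setC : permissive q e beta Lambda (~: Lambda).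
Proof.
rewrite /permissive subxx; apply/forallP => u; apply/implyP.
by rewrite !inE negbK => /andP [/negbTE -> /andP []].
Qed.

Lemma B_Omega_subC : S \subset ~: Lambda -> B_Omega q e beta Lambda S \subset ~: Lambda.
Proof. by move=> SL; apply: bigcap_inf; rewrite permissive_setC. Qed.

(* A free boundary vertex u of the minimal block lies outside some permissive
   block containing S, hence on that block's free boundary. *)
Lemma B_Omega_boundary_low_degree (u : V) :
  u \in boundary e (B_Omega q e beta Lambda S) :\: Lambda ->
  low_degree q e beta u.
Proof.
rewrite !inE => /andP [uL /andP [uB /existsP [w /andP [wB euw]]]].
have [B' /andP [permB' SB'] uB'] : exists2 B', permissive q e beta Lambda B' && (S \subset B') & u \notin B'.
  apply/exists_inP; apply: contraR uB => /exists_inPn uB'.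
  by apply/bigcapP => B' /uB'; rewrite negbK.
have wB' : w \in B' by move: wB => /bigcapP; apply; rewrite permB'.
case/andP: permB' => _ /forall_inP; apply.
by rewrite !inE uL uB' /=; apply/exists_inP; exists w.
Qed.

End MinimalBlock.

Section Patching.
Variables (V : finType) (q : nat) (e : rel V).
Hypothesis e_sym : symmetric e.
Variables (Lambda B : {set V}) (sigma rho0 pi : V -> 'I_q).
Hypotheses (BL : B \subset ~: Lambda) (rho0_sigma : {in Lambda, rho0 =1 sigma}).

Definition patch : {ffun V -> 'I_q} := [ffun x => if x \in B then pi x else rho0 x].

Lemma patch_glue : {in Lambda :|: B, patch =1 glue Lambda sigma pi}.
Proof.
move=> x; rewrite inE /glue ffunE.
case xL: (x \in Lambda); case xB: (x \in B) => //= _; last exact: rho0_sigma.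
by move/subsetP: BL => /(_ x xB); rewrite inE xL.
Qed.

Lemma patch_proper_off_boundary :
  proper_on e [set: V] rho0 -> proper_on e (Lambda :|: B) (glue Lambda sigma pi) ->
  forall u w, u \notin boundary e B :\: Lambda -> w \notin boundary e B :\: Lambda ->
    e u w -> patch u != patch w.
Proof.
move=> rho0P glueP.
have nbr_in : forall a b, e a b -> a \in B ->
    b \notin boundary e B :\: Lambda -> b \in Lambda :|: B.
  move=> a b eab aB; rewrite !inE; case: (b \in Lambda) => //; case: (b \in B) => //=.
  by move=> /exists_inPn /(_ a aB); rewrite e_sym eab.
have BLB : forall x, x \in B -> x \in Lambda :|: B by move=> x xB; rewrite inE xB orbT.
move=> u w uS wS euw.
case uB: (u \in B).
  have uLB := BLB u uB; have wLB := nbr_in u w euw uB wS.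
  by rewrite !patch_glue //; apply: glueP.
case wB: (w \in B).
  have wLB := BLB w wB; have uLB := nbr_in w u (etrans (e_sym w u) euw) wB uS.
  by rewrite !patch_glue //; apply: glueP.
by rewrite !ffunE uB wB; apply: rho0P; rewrite ?in_setT.
Qed.

End Patching.

Theorem mainTheorem5 (R : realFieldType) (V : finType) (q : nat) (e : rel V)
  (e_sym : symmetric e) (e_irr : irreflexive e) (hq : (3 <= q)%N)
  (Lambda : {set V}) (sigma : {ffun V -> 'I_q})
  (hfeas : feasible e (0 : R) Lambda sigma)
  (v : V) (hv : v \notin Lambda) (pi : {ffun V -> 'I_q})
  (hloc : locally_feasible e (0 : R) Lambda sigma
            (B_Omega q e (0 : R) Lambda [set v]) pi) :
  exists rho : {ffun V -> 'I_q},
    0 < w_Omega e (0 : R) Lambda sigma rho /\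
    (forall x, x \in B_Omega q e (0 : R) Lambda [set v] -> rho x = pi x).
Proof.
set B := B_Omega q e 0 Lambda [set v] in hloc *.
have [rho0 /w_Omega0_gt0P [rho0_sigma rho0P]] := hfeas.
have BL : B \subset ~: Lambda by apply: B_Omega_subC; rewrite sub1set inE.
have degS : {in boundary e B :\: Lambda, forall u, deg e u < q}%N.
  by move=> u /B_Omega_boundary_low_degree /low_degree0_lt.
have patchP := patch_proper_off_boundary e_sym BL rho0_sigma rho0P
  (locally_feasible0P hloc).
have [rho [rho_patch rhoP]] := greedy_recolouring e_sym e_irr degS patchP.
have rho_glue : {in Lambda :|: B, rho =1 glue Lambda sigma pi}.
  move=> x xLB; rewrite -(patch_glue pi BL rho0_sigma xLB); apply: rho_patch.
  rewrite !inE negb_and negbK; case/setUP: xLB => [-> // | xB].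
  by rewrite xB orbT.
exists rho; split.
  apply/w_Omega0_gt0P; split=> // x xL.
  by rewrite rho_glue /glue ?inE ?xL.
move=> x xB; rewrite rho_glue /glue ?inE ?xB ?orbT //.
by move/subsetP: BL => /(_ x xB); rewrite inE => /negbTE ->.
Qed.
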